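(* Let $p,n\in\mathbb N$ with $p\ge n\ge 5$ and $n-1\nmid p$. Then $$\frac{(n-2)p}{2}-\frac{(n-1)^2}{8}\le ex(p;T_n^2)\le \frac{(n-2)(p-1)}{2}.$$
   Context: All graphs are finite and simple; a graph ''contains'' $H$ if it has a subgraph isomorphic to $H$. For a graph $L$ and $p\in\mathbb N$, $ex(p;L)$ is the maximum number of edges in a graph on $p$ vertices containing no copy of $L$. For $n\ge 5$, $T_n^2$ is the tree with vertex set $\{v_0,\ldots,v_{n-1}\}$ and edge set $\{v_0v_1,\ldots,v_0v_{n-3},\,v_{n-3}v_{n-2},\,v_{n-3}v_{n-1}\}$. *)

From mathcomp Require Import all_boot.
Set Implicit Arguments. Unset Strict Implicit. Unset Printing Implicit Defensive.

Definition simple_graph (V : finType) (G : {set {set V}}) : bool :=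
  [forall e in G, #|e| == 2].

Definition contains (V W : finType) (G : {set {set V}}) (H : {set {set W}}) : bool :=
  [exists f : {ffun W -> V}, injectiveb f && [forall e in H, (f @: e) \in G]].

Definition ex (p : nat) (W : finType) (L : {set {set W}}) : nat :=
  \max_(G : {set {set 'I_p}} | simple_graph G && ~~ contains G L) #|G|.

Definition T2edge (n i j : nat) : bool :=
  ((i == 0) && (1 <= j <= n - 3)) ||
  ((i == n - 3) && ((j == n - 2) || (j == n - 1))).

Definition T2 (n : nat) : {set {set 'I_n}} :=
  [set e : {set 'I_n} | [exists i : 'I_n, exists j : 'I_n,
     (e == [set i; j]) && T2edge n i j]].

From mathcomp Require Import all_boot zify.
Set Implicit Arguments. Unset Strict Implicit. Unset Printing Implicit Defensive.

(* Upper bound.  Let G be T_n^2-free.  The key configuration is a "fork": an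
   edge ab, two more neighbours y, z of b and n-4 further neighbours of a form
   a copy of T_n^2 (fork_contains_T2).  Excluding forks bounds degrees locally:
   neighbours of a vertex of degree >= n-1 have degree <= 2 and <= n-4, and a
   neighbour of a vertex of degree >= n-2 that sees past it has degree <= 2.
   Case A (some degree >= n-1): charge every big vertex to its (small)
   neighbours; each small vertex carries total charge <= n-2.  Case B (all
   degrees <= n-2): it suffices to find total deficiency sum (n-2-deg v) >= n-2,
   either around a vertex of degree n-2 with a vertex at distance 2, or, if
   there is none, on the vertices outside the union of the closed
   neighbourhoods of degree n-2 vertices, which is nonempty because these
   neighbourhoods partition their union into blocks of size n-1.

   Lower bound.  Cut 0..p-1 into consecutive blocks of n-1 vertices and take
   the union of the cliques on the blocks: it is T_n^2-free since T_n^2 is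
   connected with n vertices, and counting degrees gives the bound. *)

Lemma card_setD_ge (T : finType) (A B : {set T}) : #|A| - #|B| <= #|A :\: B|.
Proof. by rewrite cardsD leq_sub2l // subset_leq_card // subsetIr. Qed.

Lemma card_setD1_ge (T : finType) (A : {set T}) x : #|A| - 1 <= #|A :\ x|.
Proof. by have := card_setD_ge A [set x]; rewrite cards1. Qed.

Lemma card_set3_le (T : finType) (x y z : T) : #|[set x; y; z]| <= 3.
Proof.
apply: leq_trans (card_size [:: x; y; z]); apply: subset_leq_card.
by apply/subsetP => u; rewrite !inE -orbA.
Qed.

Lemma card_indicator (T : finType) (A : {set T}) : #|A| = \sum_x (x \in A).
Proof. by rewrite -sum1_card big_mkcond; apply: eq_bigr => x _; case: (x \in A). Qed.

Lemma sum_setC (T : finType) (B : {set T}) (F : T -> nat) :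
  \sum_x F x = \sum_(x in B) F x + \sum_(x in ~: B) F x.
Proof. by rewrite (bigID (mem B)) /=; congr (_ + _); apply: eq_bigl => x; rewrite inE. Qed.

(* The deficiency count of the no-open-vertex case: m >= 1 vertices, each with
   deficiency at least max(1, n-1-m), have total deficiency at least n-2. *)
Lemma deficiency_arith n m : 0 < m -> n - 2 <= m * maxn 1 (n - 1 - m).
Proof.
move=> m_gt0; case: (leqP (n - 2) m) => [nm | mn].
  by apply: leq_trans nm _; rewrite leq_pmulr // leq_maxl.
rewrite (maxn_idPr _); last by lia.
have [k [j [-> ->]]] : exists k j, m = k.+1 /\ n = k + j + 4.
  by exists m.-1, (n - m - 3); lia.
have -> : k + j + 4 - 1 - k.+1 = j.+2 by lia.
nia.
Qed.

(* With p = q k + r and q k (k-1) + r (r-1) <= 2 E, we get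
   4 (k-1) p <= 8 E + k^2; the slack is (k - 2 r)^2 >= 0 (Cauchy). *)
Lemma lower_arith k q r E : 0 < k -> q * k * (k - 1) + r * (r - 1) <= 2 * E ->
  4 * (k - 1) * (q * k + r) <= 8 * E + k ^ 2.
Proof.
move=> k_gt0 hE; have [cauchy _] := nat_Cauchy (2 * r) k.
have [j kj] : exists j, k = j.+1 by exists k.-1; lia.
case: r => [|r] in hE cauchy *; subst k; rewrite !subn1 /= in hE *; nia.
Qed.

Section SimpleGraph.
Variables (V : finType) (G : {set {set V}}).
Hypothesis simpleG : simple_graph G.

Definition nbhd (v : V) : {set V} := [set u | [set v; u] \in G].
Local Notation N := nbhd.
Local Notation deg v := #|N v|.

Lemma in_nbhd u v : (u \in N v) = ([set v; u] \in G).
Proof. by rewrite inE. Qed.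

Lemma nbhd_sym u v : (u \in N v) = (v \in N u).
Proof. by rewrite !in_nbhd setUC. Qed.

Lemma card_edge e : e \in G -> #|e| = 2.
Proof. by move=> eG; move/forall_inP: simpleG => /(_ e eG) /eqP. Qed.

Lemma nbhd_irr v : v \notin N v.
Proof. by apply/negP; rewrite in_nbhd => /card_edge; rewrite setUid cards1. Qed.

Lemma nbhd_neq u v : u \in N v -> u != v.
Proof. by apply: contraTneq => ->; exact: nbhd_irr. Qed.

Lemma edge_through e v : e \in G -> v \in e -> exists2 u, u \in N v & e = [set v; u].
Proof.
move=> eG ve; have /cards2P [x [y [_ exy]]] : #|e| == 2 by rewrite card_edge.
move: ve; rewrite exy !inE => /orP [] /eqP ->; first by exists y; rewrite ?in_nbhd -?exy.
by exists x; rewrite ?in_nbhd setUC -?exy.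
Qed.

Lemma deg_edges v : deg v = #|[set e in G | v \in e]|.
Proof.
have inj : {in N v &, injective (fun u => [set v; u])}.
  move=> x y xv _ /setP /(_ x); rewrite !inE eqxx orbT (negbTE (nbhd_neq xv)).
  by move/esym/eqP.
rewrite -(card_in_imset inj); apply: eq_card => e; rewrite inE.
apply/imsetP/andP => [[u uv ->]|[eG ve]]; first by rewrite -in_nbhd uv set21.
by have [u uv ->] := edge_through eG ve; exists u.
Qed.

Lemma handshake : \sum_v deg v = 2 * #|G|.
Proof.
transitivity (\sum_v \sum_(e in G) (v \in e)).
  apply: eq_bigr => v _; rewrite deg_edges -sum1_card big_mkcond /=.
  by rewrite [RHS]big_mkcond; apply: eq_bigr => e _; rewrite inE; case: (e \in G).
rewrite exchange_big /= mulnC -sum_nat_const; apply: eq_bigr => e eG.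
by rewrite -(card_edge eG) -sum1_card [RHS]big_mkcond.
Qed.

Lemma sum_card_nbhdI (B : {set V}) : \sum_v #|N v :&: B| = \sum_(v in B) deg v.
Proof.
under eq_bigr do rewrite card_indicator.
rewrite exchange_big [RHS]big_mkcond; apply: eq_bigr => u _ /=.
under eq_bigr do rewrite inE nbhd_sym.
rewrite card_indicator; case: (u \in B); last by rewrite big1 // => v _; rewrite andbF.
by apply: eq_bigr => v _; rewrite andbT.
Qed.

End SimpleGraph.

Section ForbiddenTree.
Variables (V : finType) (G : {set {set V}}).
Hypothesis simpleG : simple_graph G.
Local Notation N := (nbhd G).
Local Notation deg v := #|N v|.

Lemma contains_T2 n (s : seq V) x0 : uniq s -> size s = n ->
  (forall i j, T2edge n i j -> nth x0 s j \in N (nth x0 s i)) -> contains G (T2 n).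
Proof.
move=> us ss adj; pose f := [ffun i : 'I_n => nth x0 s i].
apply/existsP; exists f; apply/andP; split.
  apply/injectiveP => i j; rewrite !ffunE => /eqP.
  by rewrite nth_uniq ?ss // => /eqP /val_inj.
apply/forall_inP => e; rewrite inE => /existsP [i /existsP [j /andP [/eqP -> ij]]].
by rewrite imsetU1 imset_set1 !ffunE -in_nbhd adj.
Qed.

Variable n : nat.
Hypothesis n_ge5 : 5 <= n.

Lemma fork_contains_T2 a b y z (L : {set V}) :
  b \in N a -> y \in N b -> z \in N b -> y != z -> y != a -> z != a ->
  L \subset N a :\: [set b; y; z] -> n - 4 <= #|L| -> contains G (T2 n).
Proof.
have [m ->] : exists m, n = m.+4 by exists (n - 4); lia.
rewrite (_ : m.+4 - 4 = m); last by lia.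
move=> ba yb zb yz ya za /subsetP LN /card_geqP [t [ut st tL]].
have tN x : x \in t -> x \in N a :\: [set b; y; z] by move/tL/LN.
have tS x : x \in t -> [/\ x \in N a, x != b, x != y & x != z].
  by move/tN; rewrite !inE -in_nbhd !negb_or => /andP [/andP [/andP [? ?] ?] ?].
set s := a :: t ++ [:: b; y; z].
apply: (@contains_T2 _ s a).
- have aNt : a \notin t.
    by apply/negP => /tS [aa _ _ _]; rewrite (negbTE (nbhd_irr simpleG a)) in aa.
  have bNt : b \notin t by apply/negP => /tS [_]; rewrite eqxx.
  have yNt : y \notin t by apply/negP => /tS [_ _]; rewrite eqxx.
  have zNt : z \notin t by apply/negP => /tS [_ _ _]; rewrite eqxx.
  rewrite /= cat_uniq mem_cat ut /= !inE !negb_or aNt bNt yNt zNt yz.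
  rewrite (eq_sym a) (eq_sym a y) (eq_sym a z) (eq_sym b y) (eq_sym b z).
  by rewrite (nbhd_neq simpleG ba) (nbhd_neq simpleG yb) (nbhd_neq simpleG zb) ya za.
- by rewrite /= size_cat st addn3.
have nth_t j : j < m -> nth a s j.+1 \in t.
  by move=> jm; rewrite /= nth_cat st jm mem_nth ?st.
have [sb sy sz] : [/\ nth a s m.+1 = b, nth a s m.+2 = y & nth a s m.+3 = z].
  have tail j : nth a s (m + j).+1 = nth a [:: b; y; z] j.
    by rewrite /= nth_cat st ltnNge leq_addr /= addKn.
  by split; [rewrite -(addn0 m) | rewrite -(addn1 m) | rewrite -(addn2 m)]; rewrite tail.
move=> i j; rewrite /T2edge.
have -> : m.+4 - 3 = m.+1 by lia.
have -> : m.+4 - 2 = m.+2 by lia.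
have -> : m.+4 - 1 = m.+3 by lia.
case/orP => [/andP [/eqP -> /andP [j1 jm]] | /andP [/eqP -> /orP [] /eqP ->]].
- case: j j1 jm => // j _; rewrite ltnS leq_eqVlt => /orP [/eqP -> | jm].
    by rewrite sb.
  by have /tS [] := nth_t j jm.
- by rewrite sb sy.
- by rewrite sb sz.
Qed.

Hypothesis T2free : ~~ contains G (T2 n).

Lemma nbr_of_big_deg_le2 a b : n - 1 <= deg a -> b \in N a -> deg b <= 2.
Proof.
move=> da ba; rewrite leqNgt; apply: contra T2free => db.
have /card_gt1P [y [z [yN zN yz]]] : 1 < #|N b :\ a|.
  by have := card_setD1_ge (N b) a; lia.
move: yN zN; rewrite !in_setD1 => /andP [ya yb] /andP [za zb].
apply: (@fork_contains_T2 a b y z (N a :\: [set b; y; z])) => //.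
have := card_setD_ge (N a) [set b; y; z]; have := card_set3_le b y z; lia.
Qed.

Lemma nbr_of_big_deg_le a b : n - 1 <= deg b -> a \in N b -> deg a <= n - 4.
Proof.
move=> db ab; rewrite leqNgt; apply: contra T2free => da.
have /card_geqP [t [ut st tN]] : n - 4 <= #|N a :\ b|.
  by have := card_setD1_ge (N a) b; lia.
set L := [set x in t].
have cL : #|L| = n - 4 by rewrite cardsE (card_uniqP ut).
have /card_gt1P [y [z [yN zN yz]]] : 1 < #|(N b :\ a) :\: L|.
  by have := card_setD_ge (N b :\ a) L; have := card_setD1_ge (N b) a; lia.
move: yN zN; rewrite !inE -!in_nbhd => /and3P [yL ya yb] /and3P [zL za zb].
apply: (@fork_contains_T2 a b y z L) => //; last by rewrite cL.
- by rewrite nbhd_sym.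
apply/subsetP => x xL.
have xy : x != y by apply: contraTneq xL => ->; rewrite inE.
have xz : x != z by apply: contraTneq xL => ->; rewrite inE.
have := tN x; rewrite inE in xL; move/(_ xL); rewrite !inE -!in_nbhd => /andP [xb ->].
by rewrite !negb_or xb xy xz.
Qed.

Lemma nbr_with_outer_nbr_deg_le2 a b w : n - 2 <= deg a -> b \in N a ->
  w \in N b -> w \notin N a -> w != a -> deg b <= 2.
Proof.
move=> da ba wb wa wna; rewrite leqNgt; apply: contra T2free => db.
have /card_gt0P [z] : 0 < #|N b :\ a :\ w|.
  by have := card_setD1_ge (N b :\ a) w; have := card_setD1_ge (N b) a; lia.
rewrite !in_setD1 => /and3P [zw za zb].
apply: (@fork_contains_T2 a b w z (N a :\: [set b; z])) => //; first by rewrite eq_sym.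
- apply/subsetP => x; rewrite !inE -!in_nbhd => /andP [/norP [xb xz] xa].
  by rewrite !negb_or xb xz xa !andbT; apply: contraNneq wa => <-.
have := card_setD_ge (N a) [set b; z]; rewrite cards2; case: (b != z); lia.
Qed.

(* Case A: some vertex has degree at least n-1.  The big vertices B form an
   independent set, and each other vertex v has #|N v :&: B| + deg v <= n - 2;
   summing this charge over the vertices outside B bounds the degree sum. *)
Lemma degree_sum_big_case v0 : n - 1 <= deg v0 ->
  \sum_v deg v <= (n - 2) * (#|V| - 1).
Proof.
move=> dv0; set B := [set v | n - 1 <= deg v].
have B_indep v : v \in B -> N v :&: B = set0.
  rewrite inE => dv; apply/setP => u; rewrite !inE -in_nbhd; apply/andP => [[uv du]].
  by have := nbr_of_big_deg_le2 dv uv; lia.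
have charge v : v \in ~: B -> #|N v :&: B| + deg v <= n - 2.
  rewrite !inE -ltnNge => dv.
  have [NB0 | /card_gt0P [u]] := posnP #|N v :&: B|; first by rewrite NB0; lia.
  rewrite !inE -in_nbhd => /andP [uv du]; rewrite nbhd_sym in uv.
  have := nbr_of_big_deg_le2 du uv; have := nbr_of_big_deg_le du uv.
  have := subset_leq_card (subsetIl (N v) B); lia.
have -> : \sum_v deg v = \sum_(v in ~: B) (#|N v :&: B| + deg v).
  rewrite big_split /= (sum_setC B) -sum_card_nbhdI (sum_setC B (fun v => #|N v :&: B|)).
  by rewrite big1 ?add0n ?addnA // => v /B_indep ->; rewrite cards0.
apply: (@leq_trans (\sum_(v in ~: B) (n - 2))); first exact: leq_sum charge.
rewrite sum_nat_const mulnC leq_mul2l.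
have := cardsC B; have : 0 < #|B| by apply/card_gt0P; exists v0; rewrite inE.
lia.
Qed.

Lemma nbhd_of_nbr_sub a u : n - 2 <= deg a -> u \in N a -> 2 < deg u ->
  N u \subset a |: N a.
Proof.
move=> da ua du; apply/subsetP => x xu; rewrite in_setU1 orbC.
case: (boolP (x \in N a)) => //= xa; have [// | xna] := eqVneq x a.
by have := nbr_with_outer_nbr_deg_le2 da ua xu xa xna; lia.
Qed.

Section DegreesAtMost.
Hypothesis deg_le : forall v, deg v <= n - 2.

Lemma open_nbrs_deg_le a b w u : n - 2 <= deg a -> b \in N a -> w \in N b ->
  w \notin N a -> w != a -> u \in N a -> deg u <= n - 3.
Proof.
move=> da ba wb wa wna ua.
have db := nbr_with_outer_nbr_deg_le2 da ba wb wa wna.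
have [-> | ub] := eqVneq u b; first by lia.
case: (leqP (deg u) 2) => du; first by lia.
have bu : b \notin N u.
  rewrite nbhd_sym; apply/negP => ub'; suff : 2 < deg b by lia.
  apply/card_gt2P; exists a, w, u; split; split => //; first by rewrite nbhd_sym.
  - by rewrite eq_sym.
  - by apply: contraNneq wa => ->.
  - exact: (nbhd_neq simpleG ua).
have sub : N u \subset (a |: N a) :\: [set u; b].
  apply/subsetP => x xu; rewrite in_setD (subsetP (nbhd_of_nbr_sub da ua du)) // andbT.
  by rewrite !inE negb_or (nbhd_neq simpleG xu); apply: contraNneq bu => <-.
have ub_in : [set u; b] \subset a |: N a.
  by apply/subsetP => x; rewrite !inE -!in_nbhd => /orP [] /eqP ->; rewrite ?ua ?ba orbT.
have := subset_leq_card sub; have := deg_le a.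
by rewrite cardsD (setIidPr ub_in) cards2 ub cardsU1 (nbhd_irr simpleG) /=; lia.
Qed.

Section NoOpenVertex.
Hypothesis no_open : forall a b w,
  n - 2 <= deg a -> b \in N a -> w \in N b -> w \in a |: N a.

Local Notation cl a := (a |: N a).
Local Notation U := (cover [set cl a | a in [set a | n - 2 <= deg a]]).

Lemma cl_adj_closed a x y : n - 2 <= deg a -> x \in cl a -> y \in N x -> y \in cl a.
Proof.
move=> da /setU1P [-> | xa] yx; [exact: setU1r | exact: no_open xa yx].
Qed.

Lemma cl_meet_sub a a' v : n - 2 <= deg a -> n - 2 <= deg a' ->
  v \in cl a -> v \in cl a' -> cl a' \subset cl a.
Proof.
move=> da da' va va'.
have a'a : a' \in cl a.
  move: va'; rewrite in_setU1 => /orP [/eqP <- // | va'].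
  by apply: (cl_adj_closed da va); rewrite -nbhd_sym.
apply/subsetP => y; rewrite in_setU1 => /orP [/eqP -> // | ya'].
exact: (cl_adj_closed da a'a ya').
Qed.

(* The vertices lying in such closed neighbourhoods are partitioned into blocks
   of size n-1. *)
Lemma cover_card_dvd : n - 1 %| #|U|.
Proof.
set P := [set cl a | a in _].
have partP : partition P U.
  rewrite /partition eqxx /=; apply/andP; split.
    apply/trivIsetP => _ _ /imsetP [a da ->] /imsetP [a' da' ->] neq.
    rewrite -setI_eq0; apply/set0Pn => -[v]; rewrite in_setI => /andP [va va'].
    move: da da' neq; rewrite !inE => da da'.
    by rewrite eqEsubset (cl_meet_sub da da' va va') (cl_meet_sub da' da va' va).
  by apply/imsetP => -[a _ /setP /(_ a)]; rewrite !inE eqxx.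
have cardP : {in P, forall A : {set V}, #|A| = n - 1}.
  move=> _ /imsetP [a da ->]; move: da; rewrite inE => da; have := deg_le a.
  by rewrite cardsU1 (nbhd_irr simpleG) /=; lia.
by rewrite (card_uniform_partition cardP partP) dvdn_mull.
Qed.

Lemma outside_cover w : w \notin U -> N w \subset ~: U :\ w /\ deg w <= n - 3.
Proof.
move=> wU; split.
  apply/subsetP => x xw; rewrite in_setD1 (nbhd_neq simpleG xw) inE /=.
  apply: contra wU => /bigcupP [_ /imsetP [a da ->] xa]; rewrite inE in da.
  apply/bigcupP; exists (cl a); first by apply/imsetP; exists a; rewrite ?inE.
  by apply: (cl_adj_closed da xa); rewrite -nbhd_sym.
rewrite leqNgt; apply: contra wU => dw; apply/bigcupP; exists (cl w).
  by apply/imsetP; exists w; rewrite ?inE //; lia.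
exact: setU11.
Qed.

Lemma no_open_deficiency : ~~ (n - 1 %| #|V|) -> n - 2 <= \sum_v (n - 2 - deg v).
Proof.
move=> ndvd; set W := ~: U.
have W_gt0 : 0 < #|W|.
  rewrite lt0n; apply: contra ndvd => /eqP W0.
  by rewrite -(cardsC U) -/W W0 addn0 cover_card_dvd.
rewrite (sum_setC W) (leq_trans _ (leq_addr _ _)) //.
apply: leq_trans (deficiency_arith n W_gt0) _; rewrite -sum_nat_const.
apply: leq_sum => w wW; have /outside_cover [Nw dw] : w \notin U by rewrite inE in wW.
by have := subset_leq_card Nw; rewrite -/W (cardsD1 w W) wW /=; lia.
Qed.

End NoOpenVertex.

(* Case B: all degrees are at most n-2, so it suffices to find total
   deficiency n-2; it comes from N a around an open vertex a, or from the
   vertices outside U when there is no open vertex. *)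
Lemma degree_sum_small_case : ~~ (n - 1 %| #|V|) ->
  \sum_v deg v <= (n - 2) * (#|V| - 1).
Proof.
move=> ndvd.
suff deficient : n - 2 <= \sum_v (n - 2 - deg v).
  have : \sum_v deg v + \sum_v (n - 2 - deg v) = #|V| * (n - 2).
    by rewrite -big_split /= (eq_bigr (fun=> n - 2)) ?sum_nat_const ?cardE // => v _; rewrite subnKC.
  rewrite [(n - 2) * _]mulnBr muln1 [#|V| * _]mulnC; lia.
case: (boolP [exists a, exists b, exists w,
   [&& n - 2 <= deg a, b \in N a, w \in N b & w \notin a |: N a]]); last first.
  move=> no_open; apply: no_open_deficiency => // a b w da ba wb.
  apply: contraNT no_open => wa; apply/existsP; exists a; apply/existsP; exists b.
  by apply/existsP; exists w; rewrite da ba wb wa.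
case/existsP => a /existsP [b /existsP [w /and4P [da ba wb]]].
rewrite in_setU1 negb_or => /andP [wna wa].
rewrite (sum_setC (N a)) (leq_trans _ (leq_addr _ _)) //.
apply: (leq_trans da); rewrite -sum1_card; apply: leq_sum => u ua.
by have := open_nbrs_deg_le da ba wb wa wna ua; lia.
Qed.

End DegreesAtMost.

Lemma T2free_edge_bound : ~~ (n - 1 %| #|V|) -> 2 * #|G| <= (n - 2) * (#|V| - 1).
Proof.
move=> ndvd; rewrite -(handshake simpleG).
case: (boolP [exists v, n - 1 <= deg v]) => [/existsP [v dv] | no_big].
  exact: degree_sum_big_case dv.
apply: degree_sum_small_case ndvd => v; rewrite leqNgt; apply: contra no_big => dv.
by apply/existsP; exists v; lia.
Qed.

End ForbiddenTree.

Lemma T2_reach n j : 5 <= n -> j < n ->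
  [\/ j = 0, T2edge n 0 j | T2edge n 0 (n - 3) /\ T2edge n (n - 3) j].
Proof.
rewrite /T2edge => n_ge5 jn; case: (posnP j) => [-> | j_gt0]; first exact: Or31.
case: (leqP j (n - 3)) => jn3; first by apply: Or32; apply/orP; left; rewrite eqxx /=; lia.
by apply: Or33; rewrite !eqxx /=; split; lia.
Qed.

Lemma T2_edge_mem n (i j : 'I_n) : T2edge n i j -> [set i; j] \in T2 n.
Proof. by move=> ij; rewrite inE; apply/existsP; exists i; apply/existsP; exists j; rewrite eqxx. Qed.

Section BlockGraph.
Variables p k : nat.
Hypothesis k_gt0 : 0 < k.

Definition block (c : nat) : {set 'I_p} := [set u : 'I_p | u %/ k == c].

Definition block_graph : {set {set 'I_p}} :=
  [set e | [exists u : 'I_p, exists v : 'I_p,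
     [&& u != v, u %/ k == v %/ k & e == [set u; v]]]].

Lemma block_graph_simple : simple_graph block_graph.
Proof.
apply/forall_inP => e; rewrite inE => /existsP [u /existsP [v /and3P [uv _ /eqP ->]]].
by rewrite cards2 uv.
Qed.

Lemma mem_block_graph u v :
  ([set u; v] \in block_graph) = (u != v) && (u %/ k == v %/ k).
Proof.
rewrite inE; apply/existsP/andP => [[u' /existsP [v' /and3P [uv' bl /eqP e]]] | [uv bl]].
  have uv'_in : (u \in [set u'; v']) && (v \in [set u'; v']) by rewrite -e !inE !eqxx orbT.
  have card_uv : #|[set u; v]| = 2 by rewrite e cards2 uv'.
  split; first by move: card_uv; rewrite cards2; case: (u != v).
  move: uv'_in bl; rewrite !inE => /andP [/orP [] /eqP -> /orP [] /eqP ->] //.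
  by rewrite eq_sym.
by exists u; apply/existsP; exists v; rewrite uv bl eqxx.
Qed.

Lemma nbhd_block_graph v : nbhd block_graph v = block (v %/ k) :\ v.
Proof.
by apply/setP => u; rewrite in_setD1 in_nbhd mem_block_graph inE eq_sym [_ == v %/ k]eq_sym.
Qed.

(* A block has at most k elements: u |-> u %% k is injective on it. *)
Lemma card_block_le c : #|block c| <= k.
Proof.
pose r (u : 'I_p) := Ordinal (ltn_pmod u k_gt0).
have inj : {in block c &, injective r}.
  move=> x y; rewrite !inE => /eqP hx /eqP hy /(congr1 val) /= hm.
  by apply: val_inj; rewrite /= (divn_eq x k) (divn_eq y k) hx hy hm.
by rewrite -(card_in_imset inj); apply: leq_trans (max_card _) _; rewrite card_ord.
Qed.

(* Any copy of T_n^2 is connected, so it lies inside one block. *)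
Lemma block_graph_T2free n : 5 <= n -> k = n - 1 -> ~~ contains block_graph (T2 n).
Proof.
move=> n_ge5 k_def; apply/negP => /existsP [f /andP [/injectiveP f_inj /forall_inP f_edge]].
have same_block (i j : 'I_n) : T2edge n i j -> f i %/ k = f j %/ k.
  move=> ij; have := f_edge _ (T2_edge_mem ij); rewrite imsetU1 imset_set1.
  by rewrite mem_block_graph => /andP [_ /eqP].
have n0 : 0 < n by lia.
have n3 : n - 3 < n by lia.
have in_block0 (j : 'I_n) : f j \in block (f (Ordinal n0) %/ k).
  rewrite inE; apply/eqP; have [j0 | j_nbr | [nbr3 j_nbr]] := T2_reach n_ge5 (ltn_ord j).
  - by congr (f _ %/ k); apply: val_inj.
  - by rewrite (same_block (Ordinal n0) j).
  - by rewrite (same_block (Ordinal n0) (Ordinal n3)) // (same_block (Ordinal n3) j).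
have : f @: [set: 'I_n] \subset block (f (Ordinal n0) %/ k).
  by apply/subsetP => _ /imsetP [j _ ->].
move/subset_leq_card; rewrite card_imset // cardsT card_ord => n_le.
by have := leq_trans n_le (card_block_le _); lia.
Qed.

Lemma divn_in_range (u c : nat) : c * k <= u < c.+1 * k -> u %/ k = c.
Proof.
case/andP => lo hi; apply/eqP; rewrite eqn_leq leq_divRL // lo /=.
by rewrite andbT -ltnS ltn_divLR.
Qed.

Lemma segment_in_block c lo hi : c * k <= lo -> hi <= c.+1 * k -> hi <= p ->
  hi - lo <= #|block c|.
Proof.
move=> clo hic hip.
have lt_p (i : 'I_(hi - lo)) : lo + i < p by have := ltn_ord i; lia.
pose g i := Ordinal (lt_p i).
have g_inj : injective g by move=> i j /(congr1 val) /= /addnI /val_inj.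
have : g @: [set: 'I_(hi - lo)] \subset block c.
  apply/subsetP => _ /imsetP [i _ ->]; rewrite inE; apply/eqP/divn_in_range.
  by have := ltn_ord i; rewrite /=; lia.
by move/subset_leq_card; rewrite card_imset // cardsT card_ord.
Qed.

(* With p = q k + r: full blocks have k vertices, the last one r vertices. *)
Definition block_size_lb (v : nat) := if v < p %/ k * k then k else p %% k.

Lemma block_size_ge (v : 'I_p) : block_size_lb v <= #|block (v %/ k)|.
Proof.
have p_eq := divn_eq p k; have v_lt := ltn_ord v.
rewrite /block_size_lb; case: ifP => v_full.
  have c_lt : v %/ k < p %/ k by rewrite ltn_divLR.
  have : (v %/ k).+1 * k <= p %/ k * k by rewrite leq_mul2r c_lt orbT.
  have := segment_in_block (leqnn (v %/ k * k)) (leqnn _); rewrite mulSn; lia.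
have v_last : v %/ k = p %/ k.
  apply: divn_in_range; rewrite leqNgt v_full /=.
  exact: ltn_trans v_lt (ltn_ceil p k_gt0).
have p_le : p <= (p %/ k).+1 * k by exact: ltnW (ltn_ceil p k_gt0).
by have := segment_in_block (leqnn (p %/ k * k)) p_le (leqnn p); rewrite v_last; lia.
Qed.

Lemma sum_block_size_lb :
  \sum_(v < p) (block_size_lb v - 1) = p %/ k * k * (k - 1) + p %% k * (p %% k - 1).
Proof.
have p_eq := divn_eq p k.
rewrite -(big_mkord xpredT (fun v => block_size_lb v - 1)).
rewrite (@big_cat_nat _ _ _ (p %/ k * k)) //=; last by lia.
rewrite (eq_big_nat _ _ (F2 := fun=> k - 1)); last first.
  by move=> v /andP [_ v_lt]; rewrite /block_size_lb v_lt.
rewrite (eq_big_nat _ _ (F1 := fun v => block_size_lb v - 1) (F2 := fun=> p %% k - 1)).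
  by rewrite !sum_nat_const_nat subn0; congr (_ + _); congr (_ * _); lia.
by move=> v /andP [v_ge _]; rewrite /block_size_lb ltnNge v_ge.
Qed.

Lemma block_graph_edges :
  p %/ k * k * (k - 1) + p %% k * (p %% k - 1) <= 2 * #|block_graph|.
Proof.
rewrite -(handshake block_graph_simple) -sum_block_size_lb; apply: leq_sum => v _.
rewrite nbhd_block_graph; have := block_size_ge v.
have v_in : v \in block (v %/ k) by rewrite inE.
by rewrite [#|block _|](cardsD1 v) v_in leq_subLR.
Qed.

End BlockGraph.

Unset Implicit Arguments.

Theorem corollary3p1 (p n : nat) (hn : 5 <= n) (hpn : n <= p)
    (hdiv : ~~ (n - 1 %| p)) :
  4 * (n - 2) * p <= 8 * ex p (T2 n) + (n - 1) ^ 2 /\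
  2 * ex p (T2 n) <= (n - 2) * (p - 1).
Proof.
have k_gt0 : 0 < n - 1 by lia.
split.
- have extremal : simple_graph (block_graph p (n - 1)) &&
                  ~~ contains (block_graph p (n - 1)) (T2 n).
    by rewrite block_graph_simple // block_graph_T2free.
  have ex_ge : #|block_graph p (n - 1)| <= ex p (T2 n) by exact: leq_bigmax_cond.
  have edges := leq_trans (block_graph_edges p k_gt0) (leq_mul (leqnn 2) ex_ge).
  have := lower_arith k_gt0 edges; rewrite -divn_eq.
  by have -> : n - 1 - 1 = n - 2 by lia.
- rewrite mulnC -leq_divRL //; apply/bigmax_leqP => G /andP [simpleG T2free].
  rewrite leq_divRL // mulnC.
  by have := T2free_edge_bound simpleG hn T2free; rewrite card_ord; apply.
Qed.
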